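(* Let $\mathfrak g$ be a Lie algebra with a Cartan subalgebra $\mathfrak h$ and a root decomposition with roots $\Delta$. Any parabolic decomposition $\Delta=\Delta^-\sqcup\Delta^0\sqcup\Delta^+$ is determined by some oriented $\langle\Delta^0\rangle_{\mathbb R}$-maximal chain of vector subspaces in $\langle\Delta\rangle_{\mathbb R}$; conversely, for an arbitrary subspace $V'$ of $\langle\Delta\rangle_{\mathbb R}$, any oriented $V'$-maximal chain in $\langle\Delta\rangle_{\mathbb R}$ defines a unique parabolic decomposition of $\Delta$ with $\Delta^0=\Delta\cap V'$.
   Context: $\langle S\rangle_{\mathbb R}$ denotes real span. For a subspace $V'\subset\langle\Delta\rangle_{\mathbb R}$ (resp. for $\langle\Delta^0\rangle_{\mathbb R}$) let $\Pi$ be the projection $\langle\Delta\rangle_{\mathbb R}\to\langle\Delta\rangle_{\mathbb R}/V'$. A decomposition $\Delta=\Delta^-\sqcup\Delta^0\sqcup\Delta^+$ is parabolic if, with $\Pi:\langle\Delta\rangle_{\mathbb R}\to\langle\Delta\rangle_{\mathbb R}/\langle\Delta^0\rangle_{\mathbb R}$, one has $\Pi(\Delta^-)\cap\Pi(\Delta^+)=\emptyset$, $0\notin\Pi(\Delta^\pm)$, and $\Pi(\Delta)\setminus\{0\}=\Pi(\Delta^-)\sqcup\Pi(\Delta^+)$ is a triangular decomposition, i.e. the cone of nonnegative real combinations of $\Pi(\Delta^+)\cup-\Pi(\Delta^-)$ contains no nonzero vector subspace. A chain of subspaces of a real vector space is a set of subspaces totally ordered by proper inclusion, maximal if not contained in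 a larger chain; a basic chain is a chain minimal with the property that every vector $x$ lies in $G_b\setminus G_a$ for some members $G_a\subset G_b$ with $\dim G_b/G_a=1$; each maximal chain contains a unique basic subchain; an orientation is a labeling by $\pm$ of the two half-spaces of $G_b\setminus G_a$ for each such codimension-one pair of the basic subchain. An (oriented) $V'$-maximal chain in $\langle\Delta\rangle_{\mathbb R}$ is the preimage under $\Pi$ of an (oriented) maximal chain in $\langle\Delta\rangle_{\mathbb R}/V'$. An oriented maximal chain in $\langle\Delta\rangle_{\mathbb R}/V'$ defines an $\mathbb R$-linear order on that quotient ($y>0$ iff $y$ lies in the $+$ half of $G_b\setminus G_a$ for the codimension-one pair with $y\in G_b\setminus G_a$), and the associated decomposition is $\Delta^0=\Delta\cap V'$, $\Delta^\pm=\{\alpha\in\Delta\setminus V':\pm\Pi(\alpha)>0\}$. *)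

From HB Require Import structures.
From mathcomp Require Import all_boot all_order all_algebra.
From mathcomp Require Import boolp classical_sets reals.
Set Implicit Arguments. Unset Strict Implicit. Unset Printing Implicit Defensive.
Import GRing.Theory Num.Theory.
Local Open Scope ring_scope.
Local Open Scope classical_set_scope.

Section Defs.
Context {R : realType} {E : lmodType R}.

Definition subspace (U : set E) : Prop :=
  U 0 /\ (forall x y, U x -> U y -> U (x + y)) /\ (forall (a : R) x, U x -> U (a *: x)).

Definition rspan (S : set E) : set E :=
  [set x | exists n (c : 'I_n -> R) (v : 'I_n -> E),
            (forall i, S (v i)) /\ x = \sum_(i < n) c i *: v i].

Definition rcone (S : set E) : set E :=
  [set x | exists n (c : 'I_n -> R) (v : 'I_n -> E),
            (forall i, 0 <= c i /\ S (v i)) /\ x = \sum_(i < n) c i *: v i].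

(* Subspaces of W/V' are represented by their preimages: subspaces G with
   V' <= G <= W.  dim (Gb/Ga) = 1 : *)
Definition codim1 (Ga Gb : set E) : Prop :=
  Ga `<=` Gb /\ exists v, Gb v /\ ~ Ga v /\
     (forall y, Gb y -> exists t : R, Ga (y - t *: v)).

Definition rel_subspace (V' W G : set E) : Prop :=
  subspace G /\ V' `<=` G /\ G `<=` W.

Definition chain (V' W : set E) (C : set (set E)) : Prop :=
  (forall G, C G -> rel_subspace V' W G) /\
  (forall G1 G2, C G1 -> C G2 -> G1 `<=` G2 \/ G2 `<=` G1).

Definition maximal_chain (V' W : set E) (C : set (set E)) : Prop :=
  chain V' W C /\ (forall C', chain V' W C' -> C `<=` C' -> C' = C).

Definition covers (V' W : set E) (B : set (set E)) : Prop :=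
  forall x, W x -> ~ V' x ->
    exists Ga Gb, B Ga /\ B Gb /\ Ga `<` Gb /\ codim1 Ga Gb /\ Gb x /\ ~ Ga x.

Definition basic_chain (V' W : set E) (B : set (set E)) : Prop :=
  chain V' W B /\ covers V' W B /\
  (forall B', chain V' W B' -> B' `<` B -> ~ covers V' W B').

(* an orientation picks, for each codim-one pair (Ga, Gb) of B, a vector
   o Ga Gb in Gb \ Ga; the "+" half of Gb \ Ga is the side containing it *)
Definition orientation (B : set (set E)) (o : set E -> set E -> E) : Prop :=
  forall Ga Gb, B Ga -> B Gb -> Ga `<` Gb -> codim1 Ga Gb ->
    Gb (o Ga Gb) /\ ~ Ga (o Ga Gb).

Definition pos_half (Ga Gb : set E) (v : E) : set E :=
  [set y | Gb y /\ ~ Ga y /\ exists t : R, 0 < t /\ Ga (y - t *: v)].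

Definition oriented_chain (V' W : set E) (C B : set (set E))
    (o : set E -> set E -> E) : Prop :=
  maximal_chain V' W C /\ B `<=` C /\ basic_chain V' W B /\ orientation B o.

Definition chain_pos (B : set (set E)) (o : set E -> set E -> E) (y : E) : Prop :=
  exists Ga Gb, B Ga /\ B Gb /\ Ga `<` Gb /\ codim1 Ga Gb /\ Gb y /\ ~ Ga y /\
    pos_half Ga Gb (o Ga Gb) y.

Definition assoc_dec (V' D : set E) (B : set (set E)) (o : set E -> set E -> E)
  : set E * set E * set E :=
  ([set a | D a /\ ~ V' a /\ chain_pos B o (- a)],
   D `&` V',
   [set a | D a /\ ~ V' a /\ chain_pos B o a]).

(* parabolic decomposition; Pi = projection modulo V0 := <Delta^0>_R,
   expressed on representatives (Pi x = Pi y  <->  V0 (x - y)) *)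
Definition parabolic (D Dm D0 Dp : set E) : Prop :=
  let V0 := rspan D0 in
  D = Dm `|` D0 `|` Dp /\ Dm `&` D0 = set0 /\ Dm `&` Dp = set0 /\ D0 `&` Dp = set0 /\
  (forall a b, Dm a -> Dp b -> ~ V0 (a - b)) /\
  (forall a, Dm a \/ Dp a -> ~ V0 a) /\
  (forall x, ((exists a, D a /\ V0 (x - a)) /\ ~ V0 x) <->
             (exists a, (Dm a \/ Dp a) /\ V0 (x - a))) /\
  (* triangular: the cone of nonnegative combinations of Pi(Dp) u -Pi(Dm)
     contains no nonzero subspace of the quotient *)
  (forall U, subspace U -> V0 `<=` U ->
     U `<=` [set x | exists k, rcone (Dp `|` ((fun a => - a) @` Dm)) k /\ V0 (x - k)] ->
     U `<=` V0).

End Defs.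

(* A parabolic decomposition amounts to a linear preorder on <Delta>_R, encoded by
   its cone P of nonnegative vectors: a convex cone with P u -P = <Delta>_R whose
   lineality space P n -P is V'.  The roots are sorted by sign, and triangularity
   says exactly that Delta^+ u -Delta^- spans, together with <Delta^0>_R, a cone that
   is pointed modulo <Delta^0>_R.  The order defined by an oriented chain is such a
   preorder, which gives the converse.  For the direct statement, Zorn's lemma
   enlarges the pointed cone to a total one P.  The archimedean classes
   o(x) < O(x) of the positive vectors x are solid subspaces, hence form a chain;
   O(x)/o(x) is a line (y - t x is in o(x) for t the supremum of the s with s x <= y);
   each vector outside V' is separated by the pair of its own classes; and orienting
   every pair by a positive vector gives back P. *)

From mathcomp Require Import all_boot all_order all_algebra.
From mathcomp Require Import boolp classical_sets reals.
From mathcomp Require Import lra.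
Import Order.TTheory GRing.Theory Num.Theory.
Local Open Scope ring_scope.
Local Open Scope classical_set_scope.
Set Implicit Arguments. Unset Strict Implicit. Unset Printing Implicit Defensive.

Section Span.
Context {R : realType} {E : lmodType R}.
Implicit Types (S U P : set E) (x y : E).

Lemma subspace0 U : subspace U -> U 0.
Proof. by case. Qed.

Lemma subspaceD U x y : subspace U -> U x -> U y -> U (x + y).
Proof. by move=> [_ [UD _]]; apply: UD. Qed.

Lemma subspaceZ U (a : R) x : subspace U -> U x -> U (a *: x).
Proof. by move=> [_ [_ UZ]]; apply: UZ. Qed.

Lemma subspaceN U x : subspace U -> U x -> U (- x).
Proof. by move=> sU Ux; rewrite -scaleN1r; apply: subspaceZ. Qed.

Lemma subspaceB U x y : subspace U -> U x -> U y -> U (x - y).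
Proof. by move=> sU Ux Uy; apply: subspaceD => //; apply: subspaceN. Qed.

Lemma subspaceNE U x : subspace U -> U (- x) -> U x.
Proof. by move=> sU /(subspaceN sU); rewrite opprK. Qed.

Lemma subspace_unscale U (a : R) x : subspace U -> a != 0 -> U (a *: x) -> U x.
Proof. by move=> sU a0 /(subspaceZ a^-1 sU); rewrite scalerA mulVf // scale1r. Qed.

Definition lincomb (Q : R -> E -> Prop) : set E :=
  [set x | exists n (c : 'I_n -> R) (v : 'I_n -> E),
            (forall i, Q (c i) (v i)) /\ x = \sum_(i < n) c i *: v i].

Lemma lincomb0 (Q : R -> E -> Prop) : lincomb Q 0.
Proof. by exists 0%N, (fun=> 0), (fun=> 0); split; [case | rewrite big_ord0]. Qed.

Lemma lincomb1 (Q : R -> E -> Prop) c v : Q c v -> lincomb Q (c *: v).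
Proof.
by move=> Qcv; exists 1%N, (fun=> c), (fun=> v); split => //; rewrite big_ord1.
Qed.

Lemma lincombD Q x y : lincomb Q x -> lincomb Q y -> lincomb Q (x + y).
Proof.
move=> [n [c [v [Qcv ->]]]] [m [d [u [Qdu ->]]]].
exists (n + m)%N, (fun i => match split i with inl j => c j | inr j => d j end),
  (fun i => match split i with inl j => v j | inr j => u j end); split.
  by move=> i; case: (split i).
rewrite big_split_ord; congr (_ + _); apply: eq_bigr => i _.
  by rewrite -[lshift m i]/(unsplit (inl i)) unsplitK.
by rewrite -[rshift n i]/(unsplit (inr i)) unsplitK.
Qed.

Lemma lincombZ (Q : R -> E -> Prop) a x :
  (forall c v, Q c v -> Q (a * c) v) -> lincomb Q x -> lincomb Q (a *: x).
Proof.
move=> QZ [n [c [v [Qcv ->]]]]; exists n, (fun i => a * c i), v; split.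
  by move=> i; apply: QZ.
by rewrite scaler_sumr; apply: eq_bigr => i _; rewrite scalerA.
Qed.

Lemma lincomb_min (Q : R -> E -> Prop) P : P 0 ->
  (forall x y, P x -> P y -> P (x + y)) -> (forall c v, Q c v -> P (c *: v)) ->
  lincomb Q `<=` P.
Proof.
by move=> P0 PD PQ _ [n [c [v [Qcv ->]]]]; apply: (big_ind P) => // i _; apply: PQ.
Qed.

Lemma rspanE S : rspan S = lincomb (fun _ v => S v).
Proof. by []. Qed.

Lemma rconeE S : rcone S = lincomb (fun c v => 0 <= c /\ S v).
Proof. by []. Qed.

Lemma rspan_subspace S : subspace (rspan S).
Proof.
rewrite rspanE; split; first exact: lincomb0.
by split=> [x y|a x]; [apply: lincombD | apply: lincombZ].
Qed.

Lemma sub_rspan S : S `<=` rspan S.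
Proof. by rewrite rspanE => x Sx; rewrite -[x]scale1r; apply: lincomb1. Qed.

Lemma rspan_min S U : subspace U -> S `<=` U -> rspan S `<=` U.
Proof.
move=> sU SU; rewrite rspanE; apply: lincomb_min => [|x y|c v /SU].
- exact: subspace0.
- exact: subspaceD.
- exact: subspaceZ.
Qed.

End Span.

Lemma Zorn_above (T : Type) (good : set (set T)) (X0 : set T) : good X0 ->
    (forall F : set (set T), F `<=` good -> F !=set0 -> total_on F subset ->
       good (\bigcup_(X in F) X)) ->
  exists2 M, X0 `<=` M & good M /\ forall N, good N -> M `<=` N -> N = M.
Proof.
(* Zorn for the X such that X0 `|` X is good, which disposes of the empty chain. *)
move=> gX0 gU.
have [F FQ Ftot|A [gA Amax]] := Zorn_bigcup (P := fun X => good (X0 `|` X)).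
  have [[X FX]|F0] := pselect (F !=set0); last first.
    have -> : F = set0 by apply/seteqP; split=> X // FX; apply: F0; exists X.
    by rewrite bigcup_set0 setU0.
  have -> : X0 `|` \bigcup_(X in F) X = \bigcup_(Y in setU X0 @` F) Y.
    apply/seteqP; split=> [t [X0t|[Y FY Yt]]|t [_ [Y FY <-] [X0t|Yt]]].
    - by exists (X0 `|` X); [exists X | left].
    - by exists (X0 `|` Y); [exists Y | right].
    - by left.
    - by right; exists Y.
  apply: gU; [by move=> _ [Y FY <-]; apply: FQ | by exists (X0 `|` X), X |].
  move=> _ _ [Y1 F1 <-] [Y2 F2 <-].
  by have [/(@setUS _ X0)|/(@setUS _ X0)] := Ftot Y1 Y2 F1 F2; [left | right].
exists (X0 `|` A); [exact: subsetUl | split=> // N gN AN].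
have X0N : X0 `<=` N by apply: subset_trans AN; apply: subsetUl.
apply: contrapT => NA; apply: (Amax N); last by rewrite setUidr.
split; first by apply: subset_trans AN; apply: subsetUr.
by move=> NA'; apply: NA; apply/seteqP; split=> // t /NA'; right.
Qed.

Section Cones.
Context {R : realType} {E : lmodType R}.
Implicit Types (S U P K M V W D : set E) (x y : E).

Definition convex_cone P : Prop :=
  [/\ P 0, (forall x y, P x -> P y -> P (x + y)) &
      (forall (a : R) x, 0 <= a -> P x -> P (a *: x))].

Lemma rcone_convex S : convex_cone (rcone S).
Proof.
rewrite rconeE; split=> [|x y|a x a0]; [exact: lincomb0 | exact: lincombD |].
by apply: lincombZ => c v [c0 Sv]; split=> //; apply: mulr_ge0.
Qed.

Lemma rcone_min S P : convex_cone P -> S `<=` P -> rcone S `<=` P.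
Proof.
move=> [P0 PD PZ] SP; rewrite rconeE; apply: lincomb_min => // c v [c0 /SP].
exact: PZ.
Qed.

Lemma sub_rcone S : S `<=` rcone S.
Proof. by rewrite rconeE => x Sx; rewrite -[x]scale1r; apply: lincomb1. Qed.

Lemma subspace_convex_cone U : subspace U -> convex_cone U.
Proof.
move=> sU; split=> [|x y|a x _]; first exact: subspace0.
  exact: subspaceD.
exact: subspaceZ.
Qed.

Definition lineality P := [set x | P x /\ P (- x)].

Lemma lineality_subspace P : convex_cone P -> subspace (lineality P).
Proof.
move=> [P0 PD PZ]; split; first by split; rewrite ?oppr0.
split=> [x y [Px Pmx] [Py Pmy]|a x [Px Pmx]]; first by split; rewrite ?opprD; apply: PD.
have [a0|a0] := leP 0 a; first by split; rewrite -?scalerN; apply: PZ.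
have na0 : 0 <= - a by rewrite oppr_ge0 ltW.
by split; rewrite -[a]opprK scaleNr ?opprK -?scalerN; apply: PZ.
Qed.

Definition pointed_cone (V W P : set E) : Prop :=
  [/\ V `<=` P, P `<=` W, convex_cone P & lineality P `<=` V].

Definition total_cone (V W P : set E) : Prop :=
  pointed_cone V W P /\ forall x, W x -> P x \/ P (- x).

Definition cone_dec (V D P : set E) : set E * set E * set E :=
  ([set a | D a /\ ~ V a /\ P (- a)], D `&` V, [set a | D a /\ ~ V a /\ P a]).

Lemma assoc_dec_cone_dec V D B o P : subspace V ->
    (forall y, rspan D y -> ~ V y -> chain_pos B o y <-> P y) ->
  assoc_dec V D B o = cone_dec V D P.
Proof.
move=> sV posE; have DW : D `<=` rspan D by apply: sub_rspan.
have posNE a : D a -> ~ V a -> chain_pos B o (- a) <-> P (- a).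
  move=> Da nVa; apply: posE; first exact: subspaceN (rspan_subspace D) (DW _ Da).
  by move/(subspaceNE sV).
congr (_, _, _); apply/seteqP; split=> a [Da [nVa pa]]; do 2 split=> //;
  by [apply/(posNE _ Da nVa) | apply/(posE _ (DW _ Da) nVa)].
Qed.

Lemma pointed_cone_bigcup V W (F : set (set E)) : subspace V ->
    F `<=` pointed_cone V W -> F !=set0 -> total_on F subset ->
  pointed_cone V W (\bigcup_(X in F) X).
Proof.
move=> sV Fp [X0 FX0] Ftot.
have common X1 X2 t1 t2 : F X1 -> F X2 -> X1 t1 -> X2 t2 -> exists2 X, F X & X t1 /\ X t2.
  move=> F1 F2 X1t X2t; have [X12|X21] := Ftot X1 X2 F1 F2.
    by exists X2 => //; split => //; apply: X12.
  by exists X1 => //; split => //; apply: X21.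
have [VX0 _ _ _] := Fp X0 FX0.
split.
- by move=> v Vv; exists X0 => //; apply: VX0.
- by move=> t [X FX Xt]; have [_ XW _ _] := Fp X FX; apply: XW.
- split.
  + by exists X0 => //; apply: VX0; apply: subspace0.
  + move=> t1 t2 [X1 F1 X1t] [X2 F2 X2t].
    have [X FX [Xt1 Xt2]] := common X1 X2 t1 t2 F1 F2 X1t X2t.
    by exists X => //; have [_ _ [_ XD _] _] := Fp X FX; apply: XD.
  + move=> a t a0 [X FX Xt]; exists X => //.
    by have [_ _ [_ _ XZ] _] := Fp X FX; apply: XZ.
- move=> t [[X1 F1 X1t] [X2 F2 X2t]].
  have [X FX [Xt1 Xt2]] := common X1 X2 _ _ F1 F2 X1t X2t.
  by have [_ _ _ Xpt] := Fp X FX; apply: Xpt.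
Qed.

Definition cone_adjoin K x := [set z | exists p (s : R), [/\ K p, 0 <= s & z = p + s *: x]].

Lemma cone_adjoin_pointed V W K x : subspace W -> pointed_cone V W K ->
  W x -> ~ K (- x) -> pointed_cone V W (cone_adjoin K x).
Proof.
move=> sW [VK KW [K0 KD KZ] Kpt] Wx Kmx; split.
- by move=> v Vv; exists v, 0; rewrite scale0r addr0; split=> //; apply: VK.
- by move=> _ [p [s [Kp _ ->]]]; apply: subspaceD sW (KW _ Kp) (subspaceZ _ sW Wx).
- split.
  + by exists 0, 0; rewrite scale0r addr0.
  + move=> _ _ [p1 [s1 [K1 s10 ->]]] [p2 [s2 [K2 s20 ->]]].
    exists (p1 + p2), (s1 + s2).
    by split; [apply: KD | apply: addr_ge0 | rewrite scalerDl addrACA].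
  + move=> a _ a0 [p [s [Kp s0 ->]]]; exists (a *: p), (a * s).
    by split; [apply: KZ | apply: mulr_ge0 | rewrite scalerDr scalerA].
- move=> z [[p [s [Kp s0 ez]]] [p' [s' [Kp' s0' ez']]]].
  have [ss|ss] := ltP 0 (s + s').
    case: Kmx; have -> : - x = (s + s')^-1 *: (p + p').
      have /eqP : (s + s') *: x + (p + p') = 0.
        by rewrite scalerDl addrC addrACA -ez -ez' subrr.
      rewrite addrC addr_eq0 => /eqP ->.
      by rewrite scalerN scalerA mulVf ?gt_eqF // scale1r.
    by apply: KZ; [rewrite invr_ge0 ltW | apply: KD].
  have [s_0 s'_0] : s = 0 /\ s' = 0 by split; lra.
  rewrite s_0 s'_0 !scale0r !addr0 in ez ez'.
  by apply: Kpt; split; [rewrite ez | rewrite ez'].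
Qed.

Lemma pointed_cone_extend V W K : subspace V -> subspace W -> pointed_cone V W K ->
  exists2 P, K `<=` P & total_cone V W P.
Proof.
move=> sV sW pK.
have [M KM [pM Mmax]] := Zorn_above pK (fun F => pointed_cone_bigcup (F := F) sV).
exists M => //; split=> // x Wx; apply: contrapT => /not_orP [nMx nMmx].
have [_ _ [M0 _ _] _] := pM.
have MMx : M `<=` cone_adjoin M x by move=> p Mp; exists p, 0; rewrite scale0r addr0.
apply: nMx; rewrite -(Mmax _ (cone_adjoin_pointed sW pM Wx nMmx) MMx).
by exists 0, 1; rewrite add0r scale1r.
Qed.

End Cones.

Section Jumps.
Context {R : realType} {E : lmodType R}.
Implicit Types (A G H : set E) (x y v w : E).

Lemma codim1_proper A G : codim1 A G -> ~ G `<=` A.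
Proof. by move=> [_ [v [Gv [Av _]]]] /(_ v Gv). Qed.

Lemma codim1_span A G w : subspace A -> codim1 A G -> G w -> ~ A w ->
  forall y, G y -> exists t : R, A (y - t *: w).
Proof.
move=> sA [_ [v [Gv [Av vspan]]]] Gw Aw y Gy.
have [s As] := vspan w Gw; have [t At] := vspan y Gy.
have s0 : s != 0 by apply: contra_notN Aw => /eqP s0; rewrite s0 scale0r subr0 in As.
exists (t / s).
have -> : y - (t / s) *: w = (y - t *: v) - (t / s) *: (w - s *: v).
  by rewrite scalerBr scalerA mulfVK // opprB addrA subrK.
by apply: subspaceB => //; apply: subspaceZ.
Qed.

Lemma codim1_sandwich A G H : subspace A -> subspace H -> codim1 A G ->
  A `<=` H -> H `<=` G -> H = A \/ H = G.
Proof.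
move=> sA sH cAG AH HG; have [HA|/nonsubset [h [Hh Ah]]] := pselect (H `<=` A).
  by left; apply/seteqP.
right; apply/seteqP; split => // y Gy.
have [t At] := codim1_span sA cAG (HG _ Hh) Ah Gy.
have -> : y = (y - t *: h) + t *: h by rewrite subrK.
by apply: subspaceD => //; [apply: AH | apply: subspaceZ].
Qed.

Section InChain.
Variable Ch : set (set E).
Hypothesis Ch_subspace : forall G, Ch G -> subspace G.
Hypothesis Ch_total : forall G1 G2, Ch G1 -> Ch G2 -> G1 `<=` G2 \/ G2 `<=` G1.

Lemma codim1_top_unique A G1 G2 : Ch A -> Ch G1 -> Ch G2 ->
  codim1 A G1 -> codim1 A G2 -> G1 = G2.
Proof.
move=> cA cG1 cG2 c1 c2.
suff le_eq H1 H2 : Ch H1 -> codim1 A H1 -> codim1 A H2 -> H1 `<=` H2 -> H1 = H2.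
  by have [/le_eq->|/le_eq<-] := Ch_total cG1 cG2.
move=> cH1 cAH1 cAH2 H12.
have [H1A|//] := codim1_sandwich (Ch_subspace cA) (Ch_subspace cH1) cAH2 cAH1.1 H12.
by case: (codim1_proper cAH1); rewrite H1A.
Qed.

Lemma codim1_nested A1 G1 A2 G2 : Ch A1 -> Ch G1 -> Ch A2 -> Ch G2 ->
  codim1 A1 G1 -> codim1 A2 G2 -> A1 `<=` A2 ->
  (A1 = A2 /\ G1 = G2) \/ G1 `<=` A2.
Proof.
move=> cA1 cG1 cA2 cG2 c1 c2 A12.
have [|A2G1] := Ch_total cG1 cA2; first by right.
have [A21|->] := codim1_sandwich (Ch_subspace cA1) (Ch_subspace cA2) c1 A12 A2G1.
  left; split => //.
  by apply: codim1_top_unique cA1 cG1 cG2 c1 _; rewrite -A21.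
by right.
Qed.

Lemma codim1_separating_unique A1 G1 A2 G2 y : Ch A1 -> Ch G1 -> Ch A2 -> Ch G2 ->
  codim1 A1 G1 -> codim1 A2 G2 -> G1 y -> ~ A1 y -> G2 y -> ~ A2 y ->
  A1 = A2 /\ G1 = G2.
Proof.
move=> cA1 cG1 cA2 cG2 c1 c2 G1y A1y G2y A2y.
have [A12|A21] := Ch_total cA1 cA2.
  by have [//|/(_ y G1y)] := codim1_nested cA1 cG1 cA2 cG2 c1 c2 A12.
have [[-> ->]|/(_ y G2y)] // := codim1_nested cA2 cG2 cA1 cG1 c2 c1 A21.
Qed.

End InChain.

Lemma exists_maximal_chain V W (B : set (set E)) : chain V W B ->
  exists2 C, B `<=` C & maximal_chain V W C.
Proof.
move=> chB; have [|C BC [chC Cmax]] := Zorn_above chB; last by exists C.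
move=> F Fch _ Ftot; split=> [G [X FX XG]|G1 G2 [X1 F1 G1X] [X2 F2 G2X]].
  exact: (Fch X FX).1.
have [X12|X21] := Ftot X1 X2 F1 F2.
  by apply: (Fch X2 F2).2 => //; apply: X12.
by apply: (Fch X1 F1).2 => //; apply: X21.
Qed.

End Jumps.

Section ChainOrder.
Context {R : realType} {E : lmodType R}.
Implicit Types (A G : set E) (x y z w : E).

Definition jump (B : set (set E)) A G := [/\ B A, B G, A `<` G & codim1 A G].

Definition above A v y := exists2 t : R, 0 < t & A (y - t *: v).

Variables (V W : set E) (B : set (set E)) (o : set E -> set E -> E).
Hypotheses (chB : chain V W B) (orB : orientation B o).

Let B_subspace G : B G -> subspace G. Proof. by move=> /chB.1 []. Qed.
Let B_total := chB.2.

Lemma jump_orient A G : jump B A G -> G (o A G) /\ ~ A (o A G).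
Proof. by case=> BA BG AG cAG; apply: orB. Qed.

Lemma above_separates A G y : jump B A G -> above A (o A G) y -> G y /\ ~ A y.
Proof.
move=> jAG [t t0 Ay]; have [Gv Av] := jump_orient jAG.
case: jAG => BA BG [AG _] _; split.
  rewrite -[y](subrK (t *: o A G)); apply: subspaceD (B_subspace BG) (AG _ Ay) _.
  exact: subspaceZ (B_subspace BG) Gv.
move=> Ayy; apply: Av; apply: (subspace_unscale (B_subspace BA) (lt0r_neq0 t0)).
have -> : t *: o A G = y - (y - t *: o A G) by rewrite opprB addrC subrK.
exact: subspaceB (B_subspace BA) Ayy Ay.
Qed.

Lemma chain_posE y :
  chain_pos B o y <-> exists A G, jump B A G /\ above A (o A G) y.
Proof.
split=> [[A [G [BA [BG [AG [cAG [_ [_ [_ [_ [t [t0 Ay]]]]]]]]]]]]|[A [G [jAG abv]]]].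
  by exists A, G; split; [split | exists t].
have [Gy Ay] := above_separates jAG abv.
case: jAG abv => BA BG AG cAG [t t0 Aty].
by exists A, G; do 6 split => //; do 2 split => //; exists t.
Qed.

Lemma chain_pos_W y : chain_pos B o y -> W y.
Proof. by move=> [A [G [_ [BG [_ [_ [Gy _]]]]]]]; apply: (chB.1 _ BG).2.2. Qed.

Lemma chain_posDV y w : chain_pos B o y -> V w -> chain_pos B o (y + w).
Proof.
move=> /chain_posE [A [G [jAG [t t0 Ay]]]] Vw; apply/chain_posE.
exists A, G; split => //; exists t => //; case: jAG => BA _ _ _.
by rewrite addrAC; apply: subspaceD (B_subspace BA) Ay ((chB.1 _ BA).2.1 _ Vw).
Qed.

Lemma chain_posZ (c : R) y : 0 < c -> chain_pos B o y -> chain_pos B o (c *: y).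
Proof.
move=> c0 /chain_posE [A [G [jAG [t t0 Ay]]]]; apply/chain_posE.
exists A, G; split => //; exists (c * t); first exact: mulr_gt0.
by rewrite -scalerA -scalerBr; case: jAG => BA _ _ _; apply: subspaceZ (B_subspace BA) Ay.
Qed.

Lemma chain_posD y z : chain_pos B o y -> chain_pos B o z -> chain_pos B o (y + z).
Proof.
move=> /chain_posE [A1 [G1 [j1 a1]]] /chain_posE [A2 [G2 [j2 a2]]].
wlog A12 : A1 G1 A2 G2 y z j1 a1 j2 a2 / A1 `<=` A2.
  move=> le_case; case: (j1) (j2) => BA1 _ _ _ [BA2 _ _ _].
  have [A12|A21] := B_total BA1 BA2; first exact: le_case j1 a1 j2 a2 A12.
  by rewrite addrC; apply: le_case j2 a2 j1 a1 A21.
case: (j1) (j2) => BA1 BG1 _ c1 [BA2 BG2 _ c2].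
(* either y and z lie over the same jump, or y lies in the bottom of the jump of z *)
have [[eA eG]|G1A2] := codim1_nested B_subspace B_total BA1 BG1 BA2 BG2 c1 c2 A12.
  subst A2 G2; case: a1 a2 => [t t0 At] [s s0 As].
  apply/chain_posE; exists A1, G1; split => //; exists (t + s); first exact: addr_gt0.
  by rewrite scalerDl opprD addrACA; apply: subspaceD (B_subspace BA1) At As.
have [G1y _] := above_separates j1 a1.
case: a2 => s s0 As; apply/chain_posE; exists A2, G2; split => //; exists s => //.
by rewrite -addrA; apply: subspaceD (B_subspace BA2) (G1A2 _ G1y) As.
Qed.

Lemma chain_pos_anti y : chain_pos B o y -> chain_pos B o (- y) -> False.
Proof.
move=> /chain_posE [A1 [G1 [j1 a1]]] /chain_posE [A2 [G2 [j2 a2]]].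
case: (j1) (j2) => BA1 BG1 _ c1 [BA2 BG2 _ c2].
have [G1y A1y] := above_separates j1 a1.
have [/(subspaceNE (B_subspace BG2)) G2y A2my] := above_separates j2 a2.
have A2y : ~ A2 y by move/(subspaceN (B_subspace BA2)).
have [eA eG] := codim1_separating_unique B_subspace B_total BA1 BG1 BA2 BG2 c1 c2
  G1y A1y G2y A2y.
subst A2 G2; case: a1 a2 => [t t0 At] [s s0 As]; have [_ Av] := jump_orient j1.
apply: Av; apply: (subspace_unscale (a := - (t + s)) (B_subspace BA1)).
  by rewrite oppr_eq0 gt_eqF // addr_gt0.
have -> : - (t + s) *: o A1 G1 = (y - t *: o A1 G1) + (- y - s *: o A1 G1).
  by rewrite addrACA addrN add0r scaleNr scalerDl opprD.
exact: subspaceD (B_subspace BA1) At As.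
Qed.

Lemma chain_pos_total : covers V W B ->
  forall y, W y -> ~ V y -> chain_pos B o y \/ chain_pos B o (- y).
Proof.
move=> covB y Wy nVy; have [A [G [BA [BG [AG [cAG [Gy Ay]]]]]]] := covB y Wy nVy.
have jAG : jump B A G by [].
have [Gv Av] := jump_orient jAG.
have [t At] := codim1_span (B_subspace BA) cAG Gv Av Gy.
have [t0|t0|t0] := ltgtP 0 t.
- by left; apply/chain_posE; exists A, G; split => //; exists t.
- right; apply/chain_posE; exists A, G; split=> //.
  exists (- t); first by rewrite oppr_gt0.
  by rewrite scaleNr opprK addrC -opprB; apply: subspaceN (B_subspace BA) At.
- by case: Ay; move: At; rewrite -t0 scale0r subr0.
Qed.

Lemma chain_cone_total : subspace V -> V `<=` W -> covers V W B ->
  total_cone V W (V `|` chain_pos B o).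
Proof.
move=> sV VW covB; split; last first.
  move=> x Wx; have [Vx|nVx] := pselect (V x); first by left; left.
  by have [] := chain_pos_total covB Wx nVx; [left; right | right; right].
split.
- by move=> x; left.
- by move=> x [/VW|/chain_pos_W].
- split; first by left; apply: subspace0.
    move=> x y [Vx|px] [Vy|py].
    + by left; apply: subspaceD.
    + by right; rewrite addrC; apply: chain_posDV.
    + by right; apply: chain_posDV.
    + by right; apply: chain_posD.
  move=> a x; rewrite le_eqVlt => /orP [/eqP <-|a0] [Vx|px].
  + by left; rewrite scale0r; apply: subspace0.
  + by left; rewrite scale0r; apply: subspace0.
  + by left; apply: subspaceZ.
  + by right; apply: chain_posZ.
- move=> x [[Vx|px] [Vmx|pmx]] //; first exact: subspaceNE sV Vmx.
  by case: (chain_pos_anti px pmx).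
Qed.

End ChainOrder.

Section TotalCone.
Context {R : realType} {E : lmodType R}.
Implicit Types (A G S : set E) (x y z v : E).
Variables (V W P : set E).
Hypotheses (sV : subspace V) (sW : subspace W) (tP : total_cone V W P).

Let VP : V `<=` P. Proof. by case: tP => -[]. Qed.
Let PW : P `<=` W. Proof. by case: tP => -[]. Qed.
Let PD x y : P x -> P y -> P (x + y).
Proof. by have [[_ _ [_ PD _] _] _] := tP; apply: PD. Qed.
Let PZ (a : R) x : 0 <= a -> P x -> P (a *: x).
Proof. by have [[_ _ [_ _ PZ] _] _] := tP; apply: PZ. Qed.
Let Ppt x : P x -> P (- x) -> V x.
Proof. by have [[_ _ _ Ppt] _] := tP; move=> Px Pmx; apply: Ppt. Qed.
Let Ptot x : W x -> P x \/ P (- x). Proof. by case: tP => _; apply. Qed.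

Definition strict_cone := [set x | x = 0 \/ P x /\ ~ V x].

Lemma strict_posD x y : P x -> ~ V x -> P y -> ~ V y -> ~ V (x + y).
Proof.
move=> Px nVx Py nVy Vxy; apply: nVx; apply: Ppt => //.
have -> : - x = y - (x + y) by rewrite opprD addrCA subrr addr0.
exact: PD Py (VP (subspaceN sV Vxy)).
Qed.

Lemma strict_cone_convex : convex_cone strict_cone.
Proof.
split; first by left.
  move=> x y [->|[Px nVx]] [->|[Py nVy]]; rewrite ?add0r ?addr0; [by left|by right..|].
  by right; split; [apply: PD | apply: strict_posD].
move=> a x; rewrite le_eqVlt => /orP [/eqP <-|a0] [->|[Px nVx]];
  rewrite ?scale0r ?scaler0; [by left..|].
right; split; first exact: PZ (ltW a0) Px.
by move/(subspace_unscale sV (lt0r_neq0 a0)).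
Qed.

Lemma rcone_strict_pointed V0 S x : subspace V0 -> V0 `<=` V ->
    S `<=` [set y | P y /\ ~ V y] ->
    (exists k, rcone S k /\ V0 (x - k)) -> (exists k, rcone S k /\ V0 (- x - k)) ->
  V0 x.
Proof.
move=> sV0 V0V SP [k1 [Sk1 V1]] [k2 [Sk2 V2]].
have strict : rcone S `<=` strict_cone.
  by apply: rcone_min strict_cone_convex _ => y /SP; right.
have V12 : V (k1 + k2).
  apply: V0V; have -> : k1 + k2 = - ((x - k1) + (- x - k2)).
    by rewrite addrACA addrN add0r opprD !opprK.
  exact: subspaceN sV0 (subspaceD sV0 V1 V2).
case: (strict _ Sk1) => [k1_0|[Pk1 nVk1]]; first by rewrite k1_0 subr0 in V1.
case: (strict _ Sk2) => [k2_0|[Pk2 nVk2]]; first by rewrite k2_0 addr0 in V12.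
by case: (strict_posD Pk1 nVk1 Pk2 nVk2).
Qed.

Lemma cone_dec_parabolic D : D `<=` W ->
  parabolic D (cone_dec V D P).1.1 (cone_dec V D P).1.2 (cone_dec V D P).2.
Proof.
rewrite /cone_dec /=; set Dm := [set a | _ /\ _ /\ P (- a)]; set Dp := [set a | _ /\ _].
move=> DW; have sV0 := rspan_subspace (D `&` V).
have V0V : rspan (D `&` V) `<=` V by apply: rspan_min => // x [].
have Dm_or_Dp a : D a -> ~ V a -> Dm a \/ Dp a.
  by move=> Da nVa; have [Pa|Pma] := Ptot (DW _ Da); [right | left].
have strict_dec a : Dm a \/ Dp a -> D a /\ ~ V a by case=> -[Da [nVa _]].
split.
  apply/seteqP; split=> [a Da|a [[[Da _]|[Da _]]|[Da _]] //].
  have [Va|nVa] := pselect (V a); first by left; right.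
  by case: (Dm_or_Dp a Da nVa) => ?; [left; left | right].
split; first by apply/seteqP; split=> a // [[_ [nVa _]] [_ Va]].
split.
  by apply/seteqP; split=> a // [[_ [nVa Pma]] [_ [_ Pa]]]; apply: nVa; apply: Ppt.
split; first by apply/seteqP; split=> a // [[_ Va] [_ [nVa _]]].
split.
  move=> a b [_ [nVa Pma]] [_ [nVb Pb]] /V0V Vab.
  have nVma : ~ V (- a) by move/(subspaceNE sV).
  by apply: (strict_posD Pb nVb Pma nVma); rewrite -opprB; apply: subspaceN.
split; first by move=> a /strict_dec [_ nVa] /V0V.
split.
  move=> x; split=> [[[a [Da V0xa]] nV0x]|[a [/strict_dec [Da nVa] V0xa]]].
    have nVa : ~ V a.
      move=> Va; apply: nV0x; rewrite -[x](subrK a).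
      exact: subspaceD sV0 V0xa (sub_rspan (conj Da Va)).
    by exists a; split => //; apply: Dm_or_Dp.
  split; first by exists a.
  move=> V0x; apply: nVa; apply: V0V.
  have -> : a = x - (x - a) by rewrite opprB addrC subrK.
  exact: subspaceB.
move=> U sU _ UK x Ux.
apply: rcone_strict_pointed sV0 V0V _ (UK _ Ux) (UK _ (subspaceN sU Ux)).
move=> y [[_ [nVy Py]]|[a [_ [nVa Pma]] <-]] //; split=> //.
by move/(subspaceNE sV).
Qed.

Definition solid G := forall y z, G y -> P (y - z) -> P (y + z) -> G z.

Lemma lineality_solid C : convex_cone C -> P `<=` C -> solid (lineality C).
Proof.
move=> [_ CD _] PC y z [Cy Cmy] Pymz Pypz; split.
  by rewrite -[z](addKr y); apply: CD Cmy (PC _ Pypz).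
by rewrite -[- z](addKr y); apply: CD Cmy (PC _ Pymz).
Qed.

Lemma positive_witness G G' y : subspace G -> G `<=` W -> subspace G' ->
  G y -> ~ G' y -> exists a, [/\ P a, G a & ~ G' a].
Proof.
move=> sG GW sG' Gy G'y; have [Py|Pmy] := Ptot (GW _ Gy); first by exists y.
by exists (- y); split => //; [apply: subspaceN | move/(subspaceNE sG')].
Qed.

Lemma solid_subspaces_total G1 G2 : subspace G1 -> subspace G2 ->
  G1 `<=` W -> G2 `<=` W -> solid G1 -> solid G2 -> G1 `<=` G2 \/ G2 `<=` G1.
Proof.
move=> s1 s2 W1 W2 so1 so2.
have [|/nonsubset [y1 [G1y1 G2y1]]] := pselect (G1 `<=` G2); first by left.
have [|/nonsubset [y2 [G2y2 G1y2]]] := pselect (G2 `<=` G1); first by right.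
have [a1 [Pa1 G1a1 G2a1]] := positive_witness s1 W1 s2 G1y1 G2y1.
have [a2 [Pa2 G2a2 G1a2]] := positive_witness s2 W2 s1 G2y2 G1y2.
have [P21|P12] := Ptot (subspaceB sW (W2 _ G2a2) (W1 _ G1a1)).
  by case: G2a1; apply: so2 G2a2 P21 _; rewrite addrC; apply: PD.
by case: G1a2; apply: so1 G1a1 _ (PD Pa1 Pa2); rewrite -opprB.
Qed.

(* For x > 0, small x and bounded x are the archimedean classes o(x) and O(x):
   the y with |y| <= e x for all e > 0, resp. |y| <= M x for some M. *)
Definition small_below x := [set y | W y /\ forall e : R, 0 < e -> P (e *: x + y)].
Definition bounded_below x := [set y | W y /\ exists M : R, P (M *: x + y)].
Definition small x := lineality (small_below x).
Definition bounded x := lineality (bounded_below x).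

Section ArchimedeanClasses.
Variable x : E.

Lemma bounded_below_convex : convex_cone (bounded_below x).
Proof.
have P0 : P 0 by apply: VP; apply: subspace0.
split.
- by split; [apply: subspace0 | exists 0; rewrite scale0r addr0].
- move=> y z [Wy [M1 P1]] [Wz [M2 P2]]; split; first exact: subspaceD.
  by exists (M1 + M2); rewrite scalerDl addrACA; apply: PD.
- move=> a y a0 [Wy [M PM]]; split; first exact: subspaceZ.
  by exists (a * M); rewrite -scalerA -scalerDr; apply: PZ.
Qed.

Lemma P_sub_bounded_below : P `<=` bounded_below x.
Proof. by move=> y Py; split; [apply: PW | exists 0; rewrite scale0r add0r]. Qed.

Lemma bounded_subspace : subspace (bounded x).
Proof. exact: lineality_subspace bounded_below_convex. Qed.

Lemma bounded_solid : solid (bounded x).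
Proof. exact: lineality_solid bounded_below_convex P_sub_bounded_below. Qed.

Lemma bounded_sub_W : bounded x `<=` W.
Proof. by move=> y [[]]. Qed.

Lemma small_sub_bounded : small x `<=` bounded x.
Proof.
have le y : small_below x y -> bounded_below x y.
  by move=> [Wy Py]; split=> //; exists 1; apply: Py; apply: ltr01.
by move=> y [/le Sy /le Smy].
Qed.

Hypothesis Px : P x.

Lemma small_below_convex : convex_cone (small_below x).
Proof.
have small0 : small_below x 0.
  by split=> [|e e0]; [apply: subspace0 | rewrite addr0; apply: PZ (ltW e0) Px].
split=> // [y z [Wy Py] [Wz Pz]|a y].
  split=> [|e e0]; first exact: subspaceD.
  have e2 : 0 < e / 2 by rewrite divr_gt0.
  by rewrite [e]splitr scalerDl addrACA; apply: PD; [apply: Py | apply: Pz].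
rewrite le_eqVlt => /orP [/eqP <- _|a0 [Wy Py]]; first by rewrite scale0r.
split=> [|e e0]; first exact: subspaceZ.
have -> : e *: x + a *: y = a *: ((e / a) *: x + y).
  by rewrite scalerDr scalerA mulrCA divff ?gt_eqF // mulr1.
by apply: PZ (ltW a0) _; apply: Py; rewrite divr_gt0.
Qed.

Lemma P_sub_small_below : P `<=` small_below x.
Proof. by move=> y Py; split=> [|e e0]; [apply: PW | apply: PD (PZ (ltW e0) Px) Py]. Qed.

Lemma small_subspace : subspace (small x).
Proof. exact: lineality_subspace small_below_convex. Qed.

Lemma small_solid : solid (small x).
Proof. exact: lineality_solid small_below_convex P_sub_small_below. Qed.

Lemma V_sub_small : V `<=` small x.
Proof.
by move=> y Vy; split; apply: P_sub_small_below; apply: VP; last apply: subspaceN.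
Qed.

Lemma bounded_self : bounded x x.
Proof.
split; first exact: P_sub_bounded_below.
split; first exact: subspaceN sW (PW Px).
by exists 1; rewrite scale1r subrr; apply: VP; apply: subspace0.
Qed.

Hypothesis nVx : ~ V x.

Lemma small_self : ~ small x x.
Proof.
move=> [_ [_ /(_ 2^-1) Phalf]]; apply: nVx.
have h0 : 0 < 1 - (2^-1 : R) by lra.
apply: (subspace_unscale sV (lt0r_neq0 h0)); apply: Ppt; first exact: PZ (ltW h0) Px.
by rewrite scalerBl scale1r opprB; apply: Phalf; rewrite invr_gt0.
Qed.

Lemma small_bounded_codim1 : codim1 (small x) (bounded x).
Proof.
split; first exact: small_sub_bounded.
exists x; split; first exact: bounded_self.
split; first exact: small_self.
move=> y [[Wy [M1 PM1]] [_ [M2 PM2]]].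
pose S := [set s : R | P (y - s *: x)].
have SM1 : S (- M1) by rewrite /S /= scaleNr opprK addrC.
have S_ub s : S s -> s <= M2.
  move=> Ps; rewrite leNgt; apply/negP => M2s.
  apply: nVx; apply: (subspace_unscale sV (a := s - M2)); first by rewrite subr_eq0 gt_eqF.
  apply: Ppt; first by apply: PZ Px; rewrite subr_ge0 ltW.
  have -> : - ((s - M2) *: x) = M2 *: x - y + (y - s *: x).
    by rewrite addrA subrK -scalerBl -scaleNr opprB.
  exact: PD PM2 Ps.
have hS : has_sup S by split; [exists (- M1) | exists M2 => s /S_ub].
have Wyt : W (y - sup S *: x) by apply: subspaceB sW Wy (subspaceZ _ sW (PW Px)).
exists (sup S); split; split=> //.
- move=> e e0; have [s Ss lt_s] := sup_adherent e0 hS.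
  have -> : e *: x + (y - sup S *: x) = (y - s *: x) + (s - sup S + e) *: x.
    by rewrite scalerDl scalerBl [RHS]addrA [LHS]addrC addrA subrK.
  by apply: PD Ss (PZ _ Px); lra.
- exact: subspaceN sW Wyt.
- move=> e e0; have notS : ~ S (sup S + e).
    by move/(sup_upper_bound hS); rewrite leNgt ltrDl e0.
  have [/notS[]|] := Ptot (subspaceB sW Wy (subspaceZ (sup S + e) sW (PW Px))).
  by rewrite scalerDl !opprB addrA [e *: x + _]addrC.
Qed.

End ArchimedeanClasses.

Definition arch_chain := [set G | exists2 x, P x /\ ~ V x & G = small x \/ G = bounded x].

Lemma arch_chain_member G : arch_chain G -> [/\ subspace G, V `<=` G, G `<=` W & solid G].
Proof.
move=> [x [Px _] [->|->]].
  split; [exact: small_subspace | exact: V_sub_small |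
          by move=> y /small_sub_bounded /bounded_sub_W | exact: small_solid].
split; [exact: bounded_subspace | | exact: bounded_sub_W | exact: bounded_solid].
by move=> y /(V_sub_small Px) /small_sub_bounded.
Qed.

Let arch_subspace G : arch_chain G -> subspace G.
Proof. by case/arch_chain_member. Qed.

Lemma arch_chain_chain : chain V W arch_chain.
Proof.
split=> [G /arch_chain_member [sG VG GW _] //|G1 G2].
move=> /arch_chain_member [s1 _ W1 so1] /arch_chain_member [s2 _ W2 so2].
exact: solid_subspaces_total.
Qed.

Let arch_total := arch_chain_chain.2.

Lemma arch_jump x : P x -> ~ V x -> jump arch_chain (small x) (bounded x).
Proof.
move=> Px nVx; split; [by exists x; [|left] | by exists x; [|right] | |].
- by split; [apply: small_sub_bounded | move/(_ x (bounded_self Px)); apply: small_self].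
- exact: small_bounded_codim1.
Qed.

Lemma arch_chain_covers : covers V W arch_chain.
Proof.
move=> y Wy nVy; have [Py|Pmy] := Ptot Wy.
  have [BA BG AG c] := arch_jump Py nVy.
  exists (small y), (bounded y); do 4 (split; first done).
  by split; [apply: bounded_self | apply: small_self].
have nVmy : ~ V (- y) by move/(subspaceNE sV).
have [BA BG AG c] := arch_jump Pmy nVmy.
exists (small (- y)), (bounded (- y)); do 4 (split; first done); split.
  exact: subspaceNE (bounded_subspace _) (bounded_self Pmy).
by move/(subspaceN (small_subspace Pmy)); apply: small_self.
Qed.

Lemma arch_chain_basic : basic_chain V W arch_chain.
Proof.
split; first exact: arch_chain_chain.
split; first exact: arch_chain_covers.
move=> B' chB' [B'B /nonsubset [G [[x [Px nVx] G_eq] nB'G]]] covB'.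
have [BA BG _ c] := arch_jump Px nVx.
have [A' [G' [B'A' [B'G' [_ [c' [G'x A'x]]]]]]] := covB' x (PW Px) nVx.
have [eA eG] := codim1_separating_unique arch_subspace arch_total (B'B _ B'A')
  (B'B _ B'G') BA BG c' c G'x A'x (bounded_self Px) (small_self Px nVx).
by apply: nB'G; case: G_eq => ->; [rewrite -eA | rewrite -eG].
Qed.

Definition arch_orient A G : E := xget 0 [set v | P v /\ G v /\ ~ A v].

Lemma arch_orient_spec A G : jump arch_chain A G ->
  [/\ P (arch_orient A G), G (arch_orient A G) & ~ A (arch_orient A G)].
Proof.
case=> BA BG _ [_ [v [Gv [Av _]]]].
have [sA _ _ _] := arch_chain_member BA; have [sG _ GW _] := arch_chain_member BG.
suff /(xgetPex 0) [? []] : exists v, [set v | P v /\ G v /\ ~ A v] v by split.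
have [Pv|Pmv] := Ptot (GW _ Gv); first by exists v.
by exists (- v); split=> //; split; [apply: subspaceN | move/(subspaceNE sA)].
Qed.

Lemma arch_chain_orientation : orientation arch_chain arch_orient.
Proof. by move=> A G BA BG AG c; have [] := arch_orient_spec (And4 BA BG AG c). Qed.

Lemma arch_chain_posE y : W y -> ~ V y ->
  chain_pos arch_chain arch_orient y <-> P y.
Proof.
have chA := arch_chain_chain; have orA := arch_chain_orientation.
(* both orders are total and antisymmetric outside V, so one inclusion suffices *)
suff pos_of_P x : P x -> ~ V x -> chain_pos arch_chain arch_orient x.
  move=> Wy nVy; split=> [py|Py]; last exact: pos_of_P.
  have [//|Pmy] := Ptot Wy.
  by case: (chain_pos_anti chA orA py); apply: pos_of_P Pmy _; move/(subspaceNE sV).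
move=> Px nVx; have jx := arch_jump Px nVx.
apply/(chain_posE chA orA); exists (small x), (bounded x); split=> //.
have [Pv Gv Av] := arch_orient_spec jx; set v := arch_orient _ _ in Pv Gv Av *.
have [t At] := codim1_span (small_subspace Px) (small_bounded_codim1 Px nVx) Gv Av
  (bounded_self Px).
exists t => //; have [//|t_lt0|t0] := ltgtP 0 t; last first.
  by case: (small_self Px nVx); move: At; rewrite -t0 scale0r subr0.
case: Av; apply: (V_sub_small Px); apply: Ppt Pv _.
have [_ [_ /(_ 1 ltr01)]] := At; rewrite scale1r opprB addrC subrK => Ptv.
have -> : - v = (- t)^-1 *: (t *: v).
  by rewrite scalerA invrN mulNr mulVf ?lt_eqF // scaleN1r.
by apply: PZ Ptv; rewrite invr_ge0 oppr_ge0 ltW.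
Qed.

End TotalCone.

Section ParabolicCone.
Context {R : realType} {E : lmodType R}.
Variables (D Dm D0 Dp : set E).
Hypothesis par : parabolic D Dm D0 Dp.

Definition parabolic_cone : set E :=
  [set x | exists k, rcone (Dp `|` (fun a => - a) @` Dm) k /\ rspan D0 (x - k)].

Let S := Dp `|` (fun a => - a) @` Dm.
Let sV0 := rspan_subspace D0.
Let sW := rspan_subspace D.
Let D_eq : D = Dm `|` D0 `|` Dp. Proof. by case: par. Qed.
Let Dm_D : Dm `<=` D. Proof. by rewrite D_eq => a Da; left; left. Qed.
Let D0_D : D0 `<=` D. Proof. by rewrite D_eq => a Da; left; right. Qed.
Let Dp_D : Dp `<=` D. Proof. by rewrite D_eq => a Da; right. Qed.
Let notV0 a : Dm a \/ Dp a -> ~ rspan D0 a.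
Proof. by case: par => _ [_ [_ [_ [_ [h _]]]]]; apply: h. Qed.

Lemma parabolic_cone_pointed : pointed_cone (rspan D0) (rspan D) parabolic_cone.
Proof.
have [S0 SD SZ] := rcone_convex S.
have V0K : rspan D0 `<=` parabolic_cone by move=> x V0x; exists 0; rewrite subr0.
have [K0 KD KZ] : convex_cone parabolic_cone.
  split; first exact: V0K (subspace0 sV0).
    move=> x y [k1 [S1 V1]] [k2 [S2 V2]]; exists (k1 + k2).
    by split; [apply: SD | rewrite opprD addrACA; apply: subspaceD].
  move=> a x a0 [k [Sk Vk]]; exists (a *: k).
  by split; [apply: SZ | rewrite -scalerBr; apply: subspaceZ].
split=> //.
- move=> x [k [Sk V0xk]]; rewrite -[x](subrK k); apply: subspaceD sW _ _.
    exact: rspan_min sW (fun a D0a => sub_rspan (D0_D D0a)) _ V0xk.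
  apply: rcone_min (subspace_convex_cone sW) _ _ Sk.
  move=> y [/Dp_D/sub_rspan //|[a /Dm_D/sub_rspan Wa <-]]; exact: subspaceN.
have [_ [_ [_ [_ [_ [_ [_ triangular]]]]]]] := par.
move=> x Lx; apply: (triangular _ (lineality_subspace (And3 K0 KD KZ))) Lx.
  by move=> y V0y; split; apply: V0K; last exact: subspaceN.
by move=> y [].
Qed.

Lemma parabolic_cone_dec P : parabolic_cone `<=` P ->
  total_cone (rspan D0) (rspan D) P -> cone_dec (rspan D0) D P = (Dm, D0, Dp).
Proof.
move=> KP [[_ _ _ Ppt] _].
have Dp_P : Dp `<=` P.
  move=> a Dpa; apply: KP; exists a; rewrite subrr.
  by split; [apply: sub_rcone; left | apply: subspace0].
have Dm_P a : Dm a -> P (- a).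
  move=> Dma; apply: KP; exists (- a); rewrite subrr.
  by split; [apply: sub_rcone; right; exists a | apply: subspace0].
have not_both a : P a -> P (- a) -> Dm a \/ Dp a -> False.
  by move=> Pa Pma /notV0; apply; apply: Ppt.
rewrite /cone_dec; congr (_, _, _); apply/seteqP; split=> a.
- move=> [+ [nV0a Pma]]; rewrite {1}D_eq => -[[//|/sub_rspan //]|Dpa].
  by case: (not_both a (Dp_P _ Dpa) Pma); right.
- by move=> Dma; split; [apply: Dm_D | split; [apply: notV0; left | apply: Dm_P]].
- move=> [+ V0a]; rewrite {1}D_eq => -[[Dma|//]|Dpa].
    by case: (notV0 (or_introl Dma) V0a).
  by case: (notV0 (or_intror Dpa) V0a).
- by move=> D0a; split; [apply: D0_D | apply: sub_rspan].
- move=> [+ [nV0a Pa]]; rewrite {1}D_eq => -[[Dma|/sub_rspan //]|//].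
  by case: (not_both a Pa (Dm_P _ Dma)); left.
- by move=> Dpa; split; [apply: Dp_D | split; [apply: notV0; right | apply: Dp_P]].
Qed.

End ParabolicCone.

Theorem theorem10 (R : realType) (E : lmodType R) (D : set E) :
  (forall Dm D0 Dp : set E, parabolic D Dm D0 Dp ->
     exists (C B : set (set E)) (o : set E -> set E -> E),
       oriented_chain (rspan D0) (rspan D) C B o /\
       assoc_dec (rspan D0) D B o = (Dm, D0, Dp)) /\
  (forall (V' : set E) (C B : set (set E)) (o : set E -> set E -> E),
     subspace V' -> V' `<=` rspan D ->
     oriented_chain V' (rspan D) C B o ->
     parabolic D (assoc_dec V' D B o).1.1 (assoc_dec V' D B o).1.2
                 (assoc_dec V' D B o).2 /\
     (assoc_dec V' D B o).1.2 = D `&` V').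
Proof.
split=> [Dm D0 Dp par|V' C B o sV VW [_ [_ [[chB [covB _]] orB]]]].
  have sV0 := rspan_subspace D0; have sW := rspan_subspace D.
  have [P KP tP] := pointed_cone_extend sV0 sW (parabolic_cone_pointed par).
  have [C archC mC] := exists_maximal_chain (arch_chain_chain sV0 sW tP).
  exists C, (arch_chain (rspan D0) (rspan D) P), (arch_orient P).
  split; last first.
    rewrite (assoc_dec_cone_dec sV0 (arch_chain_posE sV0 sW tP)).
    exact: (parabolic_cone_dec par KP tP).
  by do 3 split=> //; [exact: arch_chain_basic | exact: arch_chain_orientation].
have tP := chain_cone_total chB orB sV VW covB.
rewrite (assoc_dec_cone_dec (P := V' `|` chain_pos B o) sV); last first.
  by move=> y _ nVy; split=> [|[/nVy|]]; [right|..].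
by split=> //; apply: (cone_dec_parabolic sV tP); apply: sub_rspan.
Qed.
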